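(* On six qubits let $|\Psi\rangle_6=\tfrac{1}{\sqrt2}(|0\rangle_6+|\overline{\mathrm{D}}\rangle_6)$ with $|\overline{\mathrm{D}}\rangle_6=\tfrac13\sum_{\{i,j\}\in P}|ij\rangle_6$, $P=\{\{1,3\},\{1,4\},\{1,5\},\{2,4\},\{2,5\},\{2,6\},\{3,5\},\{3,6\},\{4,6\}\}$. Let $\mathcal{G}_6$ be the group of unitaries on $(\mathbb{C}^2)^{\otimes6}$ generated by the cyclic qubit permutation $P_c$ (mapping the qubit order $(123456)\mapsto(234561)$) and the reflection $R$ (mapping $(123456)\mapsto(654321)$). Then there is no Hermitian operator $\overline{H}$ on $(\mathbb{C}^2)^{\otimes6}$ of the form $\overline{H}=\sum_{\{i,j\}}\overline{H}_{\{i,j\}}\otimes I_{\text{rest}}$ (sum over two-element subsets $\{i,j\}\subset\{1,\dots,6\}$, each $\overline{H}_{\{i,j\}}$ acting on qubits $i,j$) satisfying $G^\dagger\overline{H}G=\overline{H}$ for all $G\in\mathcal{G}_6$ and having $|\Psi\rangle_6$ as its unique ground state.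
   Context: $|0\rangle_6=|0\rangle^{\otimes6}$ and $|ij\rangle_6$ is the computational basis state with qubits $i,j$ in $|1\rangle$ and all others in $|0\rangle$. Qubit permutations act as unitaries permuting tensor factors. A Hermitian operator has $|\psi\rangle$ as its unique ground state if the eigenspace of its smallest eigenvalue is $\mathrm{span}\{|\psi\rangle\}$. *)

(* complex numbers modelled by algC (algebraic complex numbers). *)
From mathcomp Require Import all_boot all_order all_algebra all_field.
Set Implicit Arguments. Unset Strict Implicit. Unset Printing Implicit Defensive.
Import Order.TTheory GRing.Theory Num.Theory.
Local Open Scope ring_scope.

(* Computational basis of six qubits: bit strings x : 'I_6 -> bool;
   qubit k (1-based in the paper) is index k-1 here. *)
Definition bits := {ffun 'I_6 -> bool}.
Definition dim6 := #|{: bits}|.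

Definition opOf (f : bits -> bits -> algC) : 'M[algC]_dim6 :=
  \matrix_(a, b) f (enum_val a) (enum_val b).
Definition vecOf (f : bits -> algC) : 'cV[algC]_dim6 :=
  \col_a f (enum_val a).

Definition adjM n (A : 'M[algC]_n) : 'M[algC]_n := (map_mx (fun z => z^*) A)^T.
Definition herm_op n (A : 'M[algC]_n) : Prop := adjM A = A.

Definition lidx (bi bj : bool) : 'I_4 := inord (2 * bi + bj).

Definition embed2 (i j : 'I_6) (h : 'M[algC]_4) : 'M[algC]_dim6 :=
  opOf (fun x y =>
    if [forall k, (k != i) && (k != j) ==> (x k == y k)]
    then h (lidx (x i) (x j)) (lidx (y i) (y j)) else 0).

Definition permOp (s : 'I_6 -> 'I_6) : 'M[algC]_dim6 :=
  opOf (fun x y => if [forall k, x k == y (s k)] then 1 else 0).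

Definition Pc : 'M[algC]_dim6 := permOp (fun k => inord ((k.+1) %% 6)).
Definition Rf : 'M[algC]_dim6 := permOp (fun k => inord (5 - k)).

(* The group generated by Pc and Rf: all finite products of generators
   and their inverses (= adjoints). *)
Inductive inG6 : 'M[algC]_dim6 -> Prop :=
| inG6_1 : inG6 1%:M
| inG6_Pc G : inG6 G -> inG6 (Pc *m G)
| inG6_Rf G : inG6 G -> inG6 (Rf *m G)
| inG6_Pci G : inG6 G -> inG6 (adjM Pc *m G)
| inG6_Rfi G : inG6 G -> inG6 (adjM Rf *m G).

Definition ket (x : bits) : 'cV[algC]_dim6 := vecOf (fun y => if y == x then 1 else 0).
Definition ket0 : 'cV[algC]_dim6 := ket [ffun _ => false].
Definition ket2 (i j : 'I_6) : 'cV[algC]_dim6 := ket [ffun k => (k == i) || (k == j)].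

Definition Ppairs : seq ('I_6 * 'I_6) :=
  [:: (inord 0, inord 2); (inord 0, inord 3); (inord 0, inord 4);
      (inord 1, inord 3); (inord 1, inord 4); (inord 1, inord 5);
      (inord 2, inord 4); (inord 2, inord 5); (inord 3, inord 5)].

Definition Dbar6 : 'cV[algC]_dim6 := 3^-1 *: \sum_(p <- Ppairs) ket2 p.1 p.2.
Definition Psi6 : 'cV[algC]_dim6 := (sqrtC 2)^-1 *: (ket0 + Dbar6).

Definition is_eigenvalue n (H : 'M[algC]_n) (l : algC) : Prop :=
  exists2 v : 'cV[algC]_n, v != 0 & H *m v = l *: v.

Definition unique_ground_state n (H : 'M[algC]_n) (psi : 'cV[algC]_n) : Prop :=
  exists l : algC,
    [/\ is_eigenvalue H l,
        (forall m, is_eigenvalue H m -> l <= m) &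
        (forall v : 'cV[algC]_n, H *m v = l *: v <-> exists c : algC, v = c *: psi)].

Definition two_body (H : 'M[algC]_dim6) : Prop :=
  exists hs : 'I_6 -> 'I_6 -> 'M[algC]_4,
    H = \sum_(i < 6) \sum_(j < 6 | (i < j)%N) embed2 i j (hs i j).

(* The vacuum |0>_6 is an eigenvector of any such H, for the eigenvalue l of
   Psi6; as it is not a multiple of Psi6, the ground space is not a line.
   Two-body locality makes an entry H(x, y) on the computational basis vanish when
   x and y differ on at least three qubits, depend only on the differing qubits
   when they differ on two, and be affine in the other qubits when they differ on
   one.  With the dihedral symmetry and hermiticity, the equations
   (H Psi6)(x) = l Psi6(x) at x = 1234, 2456, 2356, 123, 124, 135, 1 and 0 become
   linear equations in H(0, 0), the flip H(1, 0), the pair creations H(1d, 0) and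
   the hoppings H(1d, 1) (d = 2, 3, 4), which force H(x, 0) = l [x = 0]. *)

From mathcomp Require Import all_boot all_order all_algebra all_field.
From mathcomp Require Import ring.
Import GRing.Theory Num.Theory.
Local Open Scope ring_scope.
Set Implicit Arguments. Unset Strict Implicit. Unset Printing Implicit Defensive.

Definition entry (M : 'M[algC]_dim6) (x y : bits) : algC := M (enum_rank x) (enum_rank y).

Lemma ketE x y : ket y (enum_rank x) 0 = (x == y)%:R.
Proof. by rewrite /ket /vecOf mxE enum_rankK; case: eqP. Qed.

Lemma mul_ket_entry M x y : (M *m ket y) (enum_rank x) 0 = entry M x y.
Proof.
rewrite mxE (bigD1 (enum_rank y)) //= ketE eqxx mulr1 big1 ?addr0 // => a ay.
by rewrite -[a]enum_valK ketE -(inj_eq enum_rank_inj) enum_valK (negPf ay) mulr0.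
Qed.

Lemma col_ketP (u v : 'cV[algC]_dim6) :
  (forall x, u (enum_rank x) 0 = v (enum_rank x) 0) -> u = v.
Proof. by move=> uv; apply/colP => a; rewrite -[a]enum_valK uv. Qed.

Lemma entry_adj M x y : entry (adjM M) x y = (entry M y x)^*.
Proof. by rewrite /entry /adjM !mxE. Qed.

Lemma adjM_mul n (A B : 'M[algC]_n) : adjM (A *m B) = adjM B *m adjM A.
Proof.
apply/matrixP => i j; rewrite !mxE rmorph_sum; apply: eq_bigr => k _.
by rewrite !mxE rmorphM mulrC.
Qed.

Lemma adjMK n (A : 'M[algC]_n) : adjM (adjM A) = A.
Proof. by apply/matrixP => i j; rewrite !mxE conjCK. Qed.

Definition relabel (s : 'I_6 -> 'I_6) (x : bits) : bits := [ffun k => x (s k)].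

Lemma permOp_ket s y : permOp s *m ket y = ket (relabel s y).
Proof.
apply: col_ketP => x; rewrite mul_ket_entry ketE /entry /permOp /opOf mxE !enum_rankK.
have -> : [forall k, x k == y (s k)] = (x == relabel s y).
  apply/forallP/eqP => [xy | -> k]; last by rewrite ffunE.
  by apply/ffunP => k; rewrite ffunE; apply/eqP.
by case: (_ == _).
Qed.

Lemma entry_mul_perm M s x y : entry (M *m permOp s) x y = entry M x (relabel s y).
Proof. by rewrite -!mul_ket_entry -mulmxA permOp_ket. Qed.

Lemma entry_conj_perm M s x y :
  entry (adjM (permOp s) *m M *m permOp s) x y = entry M (relabel s x) (relabel s y).
Proof.
rewrite entry_mul_perm -[LHS]conjCK -entry_adj adjM_mul adjMK entry_mul_perm.
by rewrite entry_adj conjCK.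
Qed.

Definition flip (p : 'I_6) (x : bits) : bits := [ffun k => (k == p) (+) x k].

Lemma flipC p q x : flip p (flip q x) = flip q (flip p x).
Proof. by apply/ffunP => k; rewrite !ffunE addbCA. Qed.

Section TwoBody.

Variable hs : 'I_6 -> 'I_6 -> 'M[algC]_4.

Definition two_body_op : 'M[algC]_dim6 :=
  \sum_(i < 6) \sum_(j < 6 | (i < j)%N) embed2 i j (hs i j).

Definition pair_term (i j : 'I_6) (x y : bits) : algC :=
  if [forall k, (k != i) && (k != j) ==> (x k == y k)]
  then hs i j (lidx (x i) (x j)) (lidx (y i) (y j)) else 0.

Lemma entry_two_body x y :
  entry two_body_op x y = \sum_(i < 6) \sum_(j < 6 | (i < j)%N) pair_term i j x y.
Proof.
rewrite /entry summxE; apply: eq_bigr => i _; rewrite summxE.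
by apply: eq_bigr => j _; rewrite /embed2 /opOf mxE !enum_rankK.
Qed.

Lemma pair_term_off i j (x y : bits) k :
  k != i -> k != j -> x k != y k -> pair_term i j x y = 0.
Proof.
move=> ki kj xyk; rewrite /pair_term; case: ifP => // /forallP /(_ k).
by rewrite ki kj (negPf xyk).
Qed.

Lemma pair_term_local i j (x y x' y' : bits) :
  (forall k, k != i -> k != j -> (x k == y k) = (x' k == y' k)) ->
  x i = x' i -> x j = x' j -> y i = y' i -> y j = y' j ->
  pair_term i j x y = pair_term i j x' y'.
Proof.
move=> agree xi xj yi yj; rewrite /pair_term xi xj yi yj.
suff -> : [forall k, (k != i) && (k != j) ==> (x k == y k)] =
          [forall k, (k != i) && (k != j) ==> (x' k == y' k)] by [].
apply: eq_forallb => k.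
by case: (boolP (k != i)); case: (boolP (k != j)) => //= *; apply: agree.
Qed.

Lemma pair_term_flip i j (x y : bits) p :
  p != i -> p != j -> pair_term i j (flip p x) (flip p y) = pair_term i j x y.
Proof.
move=> pi pj; apply: pair_term_local => [k _ _||||]; rewrite !ffunE.
- by case: (k == p); rewrite ?eqb_negLR ?negbK.
all: by rewrite eq_sym ?(negPf pi) ?(negPf pj).
Qed.

Lemma pair_term_affine i j (x y : bits) m p q :
  m != p -> m != q -> p != q -> x m != y m ->
  pair_term i j (flip p (flip q x)) (flip p (flip q y)) - pair_term i j (flip p x) (flip p y)
  - pair_term i j (flip q x) (flip q y) + pair_term i j x y = 0.
Proof.
move=> mp mq pq xym.
have qp : q != p by rewrite eq_sym.
have flip_m r z : m != r -> flip r z m = z m by move=> mr; rewrite ffunE (negPf mr).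
have [<-|pi] := eqVneq p i; last have [<-|pj] := eqVneq p j; last first.
- by rewrite !(pair_term_flip _ _ pi pj); ring.
- have [<-|qi] := eqVneq q i.
    by rewrite !(pair_term_off mq mp) ?subrr ?add0r // ?flip_m.
  by rewrite (flipC p q x) (flipC p q y) !(pair_term_flip _ _ qi qp); ring.
- have [<-|qj] := eqVneq q j.
    by rewrite !(pair_term_off mp mq) ?subrr ?add0r // ?flip_m.
  by rewrite (flipC p q x) (flipC p q y) !(pair_term_flip _ _ qp qj); ring.
Qed.

Lemma two_body_far (x y : bits) p q r : p != q -> p != r -> q != r ->
  x p != y p -> x q != y q -> x r != y r -> entry two_body_op x y = 0.
Proof.
move=> pq pr qr xyp xyq xyr; rewrite entry_two_body big1 // => i _.
rewrite big1 // => j _.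
have [<-|pi] := eqVneq p i.
  have [<-|qj] := eqVneq q j; first by apply: pair_term_off xyr; rewrite eq_sym.
  by apply: pair_term_off _ qj xyq; rewrite eq_sym.
have [<-|pj] := eqVneq p j; last exact: pair_term_off pi pj xyp.
have [<-|qi] := eqVneq q i; first by apply: pair_term_off xyr; rewrite eq_sym.
by apply: pair_term_off qi _ xyq; rewrite eq_sym.
Qed.

Lemma two_body_pair (x y x' y' : bits) p q : p != q ->
  (forall k, (x k != y k) = (k == p) || (k == q)) ->
  (forall k, (x' k != y' k) = (k == p) || (k == q)) ->
  x' p = x p -> x' q = x q -> y' p = y p -> y' q = y q ->
  entry two_body_op x y = entry two_body_op x' y'.
Proof.
move=> pq dxy dxy' xp xq yp yq; rewrite !entry_two_body.
apply: eq_bigr => i _; apply: eq_bigr => j _.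
have agree k : k != p -> k != q -> (x k == y k) = (x' k == y' k).
  move=> kp kq.
  by rewrite -[x k == _]negbK -[x' k == _]negbK dxy dxy' (negPf kp) (negPf kq).
have xyp : x p != y p by rewrite dxy eqxx.
have xyq : x q != y q by rewrite dxy eqxx orbT.
have xyp' : x' p != y' p by rewrite dxy' eqxx.
have xyq' : x' q != y' q by rewrite dxy' eqxx orbT.
have qp : q != p by rewrite eq_sym.
have [<-|pi] := eqVneq p i.
  have [<-|qj] := eqVneq q j; first exact: pair_term_local agree _ _ _ _.
  by rewrite (pair_term_off qp qj xyq) (pair_term_off qp qj xyq').
have [<-|pj] := eqVneq p j.
  have [<-|qi] := eqVneq q i; first by apply: pair_term_local => // k kq kp; apply: agree.
  by rewrite (pair_term_off qi qp xyq) (pair_term_off qi qp xyq').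
by rewrite (pair_term_off pi pj xyp) (pair_term_off pi pj xyp').
Qed.

Lemma two_body_affine (x y : bits) m p q : m != p -> m != q -> p != q -> x m != y m ->
  entry two_body_op (flip p (flip q x)) (flip p (flip q y))
  - entry two_body_op (flip p x) (flip p y) - entry two_body_op (flip q x) (flip q y)
  + entry two_body_op x y = 0.
Proof.
move=> mp mq pq xym; rewrite !entry_two_body -!sumrB -big_split big1 // => i _.
by rewrite -!sumrB -big_split big1 // => j _; exact (pair_term_affine i j mp mq pq xym).
Qed.

End TwoBody.

(* Qubits are numbered from 0: [qubits [:: 0; 2]] is |13>_6. *)
Definition qubits (A : seq nat) : bits := [ffun k : 'I_6 => (k : nat) \in A].

Definition diffs (A B : seq nat) : seq nat :=
  [seq k <- iota 0 6 | (k \in A) != (k \in B)].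

Definition without (p : nat) (A : seq nat) : seq nat := [seq k <- A | k != p].

Lemma qubitsE A (k : 'I_6) : qubits A k = ((k : nat) \in A).
Proof. by rewrite ffunE. Qed.

Lemma inord_eq (k : 'I_6) (p : nat) : (p < 6)%N -> (k == inord p) = ((k : nat) == p).
Proof. by move=> p6; rewrite -val_eqE /= inordK. Qed.

Lemma mem_diffs A B (k : 'I_6) : ((k : nat) \in diffs A B) = (qubits A k != qubits B k).
Proof. by rewrite mem_filter mem_iota leq0n ltn_ord !qubitsE !andbT. Qed.

Lemma diffs_inord A B p :
  p \in diffs A B -> (p < 6)%N /\ qubits A (inord p) != qubits B (inord p).
Proof.
rewrite mem_filter mem_iota add0n => /andP[dp /andP[_ p6]].
by rewrite !qubitsE inordK.
Qed.

Lemma eq_qubits A B : (qubits A == qubits B) = (diffs A B == [::]).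
Proof.
apply/eqP/eqP => [eqAB | nodiff].
  apply/eqP; rewrite -(negbK (_ == _)) -has_filter; apply/hasPn => p.
  rewrite mem_iota add0n => /andP[_ p6].
  move/(congr1 (fun x : bits => x (inord p))): eqAB.
  by rewrite !qubitsE inordK // => ->; rewrite eqxx.
by apply/ffunP => k; apply/eqP; rewrite -[_ == _]negbK -mem_diffs nodiff.
Qed.

Lemma qubits_support (x : bits) : qubits [seq k <- iota 0 6 | x (inord k)] = x.
Proof.
by apply/ffunP => k; rewrite qubitsE mem_filter mem_iota leq0n ltn_ord inord_val !andbT.
Qed.

Lemma flip_without p A :
  (p < 6)%N -> p \in A -> flip (inord p) (qubits (without p A)) = qubits A.
Proof.
move=> p6 pA; apply/ffunP => k; rewrite !ffunE mem_filter inord_eq //.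
by case: eqP => [-> | _] //=; rewrite pA.
Qed.

Lemma withoutC p q A : without p (without q A) = without q (without p A).
Proof. by rewrite /without -!filter_predI; apply: eq_filter => k /=; rewrite andbC. Qed.

Definition cycle_qubits (A : seq nat) : seq nat :=
  [seq k <- iota 0 6 | (k.+1 %% 6)%N \in A].
Definition mirror_qubits (A : seq nat) : seq nat :=
  [seq k <- iota 0 6 | (5 - k)%N \in A].

Lemma relabel_qubits (s : 'I_6 -> 'I_6) (f : nat -> nat) A :
  (forall k : 'I_6, s k = f k :> nat) ->
  relabel s (qubits A) = qubits [seq k <- iota 0 6 | f k \in A].
Proof.
move=> sf; apply/ffunP => k.
by rewrite !ffunE sf mem_filter mem_iota leq0n ltn_ord !andbT.
Qed.

Definition dihedral_orbit (A B : seq nat) : seq (seq nat * seq nat) :=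
  [seq (iter k cycle_qubits (if r then mirror_qubits A else A),
        iter k cycle_qubits (if r then mirror_qubits B else B))
  | r <- [:: false; true], k <- iota 0 6].

Definition binary_code (A : seq nat) : nat := sumn [seq 2 ^ k | k <- A]%N.

(* Symmetry-related entries get syntactically equal representatives, so that
   [ring] can identify them. *)
Definition orbit_rep (A B : seq nat) : seq nat * seq nat :=
  let key u := (binary_code u.1 * 64 + binary_code u.2)%N in
  foldr (fun u v => if (key u < key v)%N then u else v) (A, B) (dihedral_orbit A B).

Lemma mem_orbit_rep A B : orbit_rep A B \in (A, B) :: dihedral_orbit A B.
Proof.
rewrite /orbit_rep; elim: (dihedral_orbit A B) => [|u s IH] /=; first exact: mem_head.
case: ifP => _; rewrite !inE ?eqxx ?orbT //.
by move: IH; rewrite inE => /orP[->|->]; rewrite ?orbT.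
Qed.

Definition psi_pairs : seq (seq nat) :=
  [:: [:: 0; 2]; [:: 0; 3]; [:: 0; 4]; [:: 1; 3]; [:: 1; 4]; [:: 1; 5];
      [:: 2; 4]; [:: 2; 5]; [:: 3; 5]].

(* [3 sqrt 2] times the amplitude of [Psi6] on [qubits A]. *)
Definition psi_weight (A : seq nat) : nat :=
  3 * (diffs A [::] == [::]) + count (fun P => diffs A P == [::]) psi_pairs.

Lemma sum_natr_bool (R : pzSemiRingType) (T : Type) (s : seq T) (b : pred T) :
  \sum_(P <- s) (b P)%:R = (count b s)%:R :> R.
Proof. by elim: s => [|P s IH]; rewrite ?big_nil ?big_cons //= natrD IH. Qed.

Lemma zero_qubits : [ffun _ => false] = qubits [::].
Proof. by apply/ffunP => k; rewrite !ffunE. Qed.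

Lemma pair_qubits a b : (a < 6)%N -> (b < 6)%N ->
  [ffun k : 'I_6 => (k == inord a) || (k == inord b)] = qubits [:: a; b].
Proof. by move=> a6 b6; apply/ffunP => k; rewrite !ffunE !inord_eq // !inE. Qed.

Lemma inv_3sqrt2_neq0 : (3 * sqrtC 2)^-1 != 0 :> algC.
Proof. by rewrite invr_eq0 mulf_neq0 ?sqrtC_eq0 ?pnatr_eq0. Qed.

Lemma Psi6_qubits : Psi6 =
  (3 * sqrtC 2)^-1 *: (3 *: ket (qubits [::]) + \sum_(P <- psi_pairs) ket (qubits P)).
Proof.
rewrite /Psi6 /Dbar6.
have -> : \sum_(p <- Ppairs) ket2 p.1 p.2 = \sum_(P <- psi_pairs) ket (qubits P).
  by rewrite /Ppairs /psi_pairs !big_cons !big_nil /ket2 /= !pair_qubits.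
have s2 : sqrtC 2 != 0 :> algC by rewrite sqrtC_eq0 pnatr_eq0.
have n3 : 3 != 0 :> algC by rewrite pnatr_eq0.
rewrite /ket0 zero_qubits !scalerDr !scalerA.
by congr (_ *: _ + _ *: _); field.
Qed.

Lemma Psi6_entry A :
  Psi6 (enum_rank (qubits A)) 0 = (3 * sqrtC 2)^-1 * (psi_weight A)%:R.
Proof.
rewrite Psi6_qubits 3!mxE summxE ketE eq_qubits.
under eq_bigr do rewrite ketE eq_qubits.
by rewrite sum_natr_bool /psi_weight natrD natrM.
Qed.

Lemma natr_mul_eq0 (R : numDomainType) n (z : R) : n.+1%:R * z = 0 -> z = 0.
Proof. by move/eqP; rewrite mulf_eq0 pnatr_eq0 => /eqP. Qed.

Section SymmetricTwoBody.

Variables (hs : 'I_6 -> 'I_6 -> 'M[algC]_4) (H : 'M[algC]_dim6) (l : algC).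
Hypothesis H_two_body : H = two_body_op hs.
Hypothesis H_herm : herm_op H.
Hypothesis H_rot : adjM Pc *m H *m Pc = H.
Hypothesis H_refl : adjM Rf *m H *m Rf = H.
Hypothesis H_Psi : H *m Psi6 = l *: Psi6.

Local Notation amp A B := (entry H (qubits A) (qubits B)).

Lemma amp_adj A B : amp A B = (amp B A)^*.
Proof. by rewrite -entry_adj H_herm. Qed.

Lemma amp_cycle A B : amp (cycle_qubits A) (cycle_qubits B) = amp A B.
Proof.
have cycleE X : relabel (fun k : 'I_6 => inord (k.+1 %% 6)) (qubits X) = qubits (cycle_qubits X).
  by apply: relabel_qubits => k; rewrite inordK // ltn_pmod.
by rewrite -!cycleE -entry_conj_perm H_rot.
Qed.

Lemma amp_mirror A B : amp (mirror_qubits A) (mirror_qubits B) = amp A B.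
Proof.
have mirrorE X : relabel (fun k : 'I_6 => inord (5 - k)) (qubits X) = qubits (mirror_qubits X).
  by apply: relabel_qubits => k; rewrite inordK // ltnS leq_subr.
by rewrite -!mirrorE -entry_conj_perm H_refl.
Qed.

Lemma amp_orbit A B C D : (C, D) \in dihedral_orbit A B -> amp C D = amp A B.
Proof.
case/allpairsP => -[r k] [_ _ /= [-> ->]].
elim: k => [|k IH] /=; last by rewrite amp_cycle.
by case: r; rewrite ?amp_mirror.
Qed.

Lemma amp_orbit_rep A B C D : orbit_rep A B = (C, D) -> amp A B = amp C D.
Proof.
move=> rep; have := mem_orbit_rep A B; rewrite rep inE.
by case/orP => [/eqP[-> ->] | /amp_orbit ->].
Qed.

Lemma amp_far A B : (2 < size (diffs A B))%N -> amp A B = 0.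
Proof.
have := filter_uniq (fun k => (k \in A) != (k \in B)) (iota_uniq 0 6).
rewrite -/(diffs A B) H_two_body.
have := @diffs_inord A B.
case: (diffs A B) => [|p [|q [|r d]]] // mem_d.
rewrite /= !inE !negb_or => /and4P[/and3P[pq pr _] /andP[qr _] _ _] _.
have /mem_d[p6 dp] : p \in [:: p, q, r & d] by rewrite inE eqxx.
have /mem_d[q6 dq] : q \in [:: p, q, r & d] by rewrite !inE eqxx orbT.
have /mem_d[r6 dr] : r \in [:: p, q, r & d] by rewrite !inE eqxx !orbT.
by apply: (two_body_far hs _ _ _ dp dq dr); rewrite -val_eqE /= !inordK.
Qed.

Lemma amp_pair A B : size (diffs A B) = 2 ->
  amp A B = amp [seq k <- A | k \in diffs A B] [seq k <- B | k \in diffs A B].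
Proof.
have := filter_uniq (fun k => (k \in A) != (k \in B)) (iota_uniq 0 6).
rewrite -/(diffs A B) H_two_body.
have dk (k : 'I_6) : (qubits A k != qubits B k) = ((k : nat) \in diffs A B).
  by rewrite mem_diffs.
have := @diffs_inord A B.
case: (diffs A B) dk => [|p [|q [|]]] // dk mem_d.
rewrite /= inE andbT => pq _.
have /mem_d[p6 _] : p \in [:: p; q] by rewrite inE eqxx.
have /mem_d[q6 _] : q \in [:: p; q] by rewrite !inE eqxx orbT.
have pq' : inord p != inord q :> 'I_6 by rewrite inord_eq // inordK.
apply: (two_body_pair hs pq') => [k | k | | | |].
- by rewrite dk !inE !inord_eq.
- by move: (dk k); rewrite !qubitsE !mem_filter !inE !inord_eq //; case: (_ || _).
all: by rewrite !qubitsE !mem_filter inordK // !inE eqxx ?orbT.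
Qed.

Lemma amp_affine A B p q : p != q -> (p < 6)%N -> (q < 6)%N ->
  p \in A -> p \in B -> q \in A -> q \in B -> diffs A B != [::] ->
  amp A B = amp (without q A) (without q B) + amp (without p A) (without p B)
            - amp (without p (without q A)) (without p (without q B)).
Proof.
move=> pq p6 q6 pA pB qA qB; case E: (diffs A B) => [//|m d] _.
have /diffs_inord[m6 dm] : m \in diffs A B by rewrite E mem_head.
have off r : r \in A -> r \in B -> (r < 6)%N -> m != r.
  by move=> rA rB r6; apply: contraNneq dm => ->; rewrite !qubitsE inordK // rA rB.
have pq' : inord p != inord q :> 'I_6 by rewrite inord_eq // inordK.
have mp : inord m != inord p :> 'I_6 by rewrite inord_eq // inordK // off.
have mq : inord m != inord q :> 'I_6 by rewrite inord_eq // inordK // off.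
have flips X : p \in X -> q \in X ->
    [/\ flip (inord p) (qubits (without p (without q X))) = qubits (without q X),
        flip (inord q) (qubits (without p (without q X))) = qubits (without p X) &
        flip (inord p) (flip (inord q) (qubits (without p (without q X)))) = qubits X].
  move=> pX qX; have pXq : p \in without q X by rewrite mem_filter pq.
  have qXp : q \in without p X by rewrite mem_filter eq_sym pq.
  by rewrite !flip_without // withoutC flip_without // flip_without.
have [eA1 eA2 eA3] := flips A pA qA; have [eB1 eB2 eB3] := flips B pB qB.
have dm0 : qubits (without p (without q A)) (inord m)
           != qubits (without p (without q B)) (inord m).
  by move: dm; rewrite !qubitsE !mem_filter inordK // (off p) // (off q).
have := two_body_affine hs mp mq pq' dm0.
rewrite eA3 eB3 eA1 eA2 eB1 eB2 -H_two_body => affine.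
by apply/eqP; rewrite -subr_eq0 -affine; apply/eqP; ring.
Qed.

(* Rewrites one entry [amp A B] of the goal by the first applicable rule: far
   entries vanish, an entry is conjugated so that [A] has at least as many qubits
   set as [B], two-qubit entries forget the other qubits, one-qubit entries with
   two common set qubits are expanded affinely, and anything else is replaced by
   its orbit representative. *)
Ltac reduce_amp :=
  match goal with |- context [entry ?M (qubits ?A) (qubits ?B)] =>
    let D := eval vm_compute in (diffs A B) in
    let K := eval vm_compute in [seq k <- iota 0 6 | (k \in A) && (k \in B)] in
    let S := eval vm_compute in (size A < size B)%N in
    lazymatch D with
    | _ :: _ :: _ :: _ => rewrite (@amp_far A B isT)
    | _ => lazymatch S with
      | true => rewrite (amp_adj A B)
      | false => first
        [ lazymatch D with [:: _; _] =>
            lazymatch K with _ :: _ => rewrite (@amp_pair A B erefl) end end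
        | lazymatch D with [:: _] =>
            lazymatch K with ?p :: ?q :: _ =>
              rewrite (@amp_affine A B p q isT isT isT isT isT isT isT isT) end end
        | let R := eval vm_compute in (orbit_rep A B) in
          lazymatch R with (?C, ?E) =>
            tryif constr_eq C A; constr_eq E B then fail
            else rewrite (@amp_orbit_rep A B C E erefl) end ]
      end
    end
  end.

Ltac reduce_amps := repeat reduce_amp.

Lemma eigen_amp A :
  3 * amp A [::] + \sum_(P <- psi_pairs) amp A P = l * (psi_weight A)%:R.
Proof.
apply: (mulfI inv_3sqrt2_neq0); rewrite mulrCA -Psi6_entry.
transitivity ((H *m Psi6) (enum_rank (qubits A)) 0); last by rewrite H_Psi mxE.
rewrite Psi6_qubits -scalemxAr mulmxDr -scalemxAr mulmx_sumr 3!mxE summxE mul_ket_entry.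
by under [in RHS]eq_bigr do rewrite mul_ket_entry.
Qed.

(* Proves [c = 0] when [c] is, up to ring identities, the difference of the two
   sides of [eigen_amp A] after every entry has been reduced. *)
Tactic Notation "eigen_relation" uconstr(A) :=
  have := eigen_amp A; rewrite /psi_pairs !big_cons big_nil;
  match goal with |- context [psi_weight ?X] =>
    let w := eval vm_compute in (psi_weight X) in rewrite (_ : psi_weight X = w) // end;
  reduce_amps; move=> /eqP; rewrite -subr_eq0 => /eqP <-; ring.

Local Notation vacuum := (amp [::] [::]).
Local Notation single := (amp [:: 0] [::]).
Local Notation double d := (amp [:: 0; d] [::]).
Local Notation hop d := (amp [:: 0; d] [:: 0]).

Lemma doubles_vanish : [/\ double 1 = 0, double 2 = 0 & double 3 = 0].
Proof.
have e0123 : double 1 + 2 * double 2 = 0 by eigen_relation [:: 0; 1; 2; 3].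
have e1345 : 2 * double 1 + double 2 + double 3 = 0 by eigen_relation [:: 1; 3; 4; 5].
have e1245 : 2 * double 2 + 2 * double 3 = 0 by eigen_relation [:: 1; 2; 4; 5].
have d2 : double 2 = 0.
  apply: (@natr_mul_eq0 _ 7).
  transitivity (4 * (double 1 + 2 * double 2) - 2 * (2 * double 1 + double 2 + double 3)
                + (2 * double 2 + 2 * double 3)); first ring.
  by rewrite e0123 e1345 e1245; ring.
split=> //; first by rewrite -e0123 d2 mulr0 addr0.
by apply: (@natr_mul_eq0 _ 1); rewrite -e1245 d2 mulr0 add0r.
Qed.

Lemma single_vanishes : single = 0.
Proof.
have e012 : 2 * hop 1 - single = 0 by eigen_relation [:: 0; 1; 2].
have e013 : 2 * hop 1 + hop 2 + hop 3 - 2 * single = 0 by eigen_relation [:: 0; 1; 3].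
have e024 : 3 * (2 * hop 2 - single) = 0 by eigen_relation [:: 0; 2; 4].
have e0 : 3 * single + 2 * (hop 2)^* + (hop 3)^* = 0 by eigen_relation [:: 0].
have h2 : 2 * hop 2 = single.
  by apply/eqP; rewrite -subr_eq0; apply/eqP/(@natr_mul_eq0 _ 2).
have h3 : 2 * hop 3 = single.
  apply/eqP; rewrite -subr_eq0; apply/eqP.
  transitivity (2 * (2 * hop 1 + hop 2 + hop 3 - 2 * single) - 2 * (2 * hop 1 - single)
                - (2 * hop 2 - single)); first ring.
  by rewrite e013 e012 h2; ring.
have conj2 (z : algC) : (2 * z)^* = 2 * z^* by rewrite rmorphM /= conjC_nat.
have c2 : 2 * (hop 2)^* = single^* by rewrite -h2 conj2.
have c3 : 2 * (hop 3)^* = single^* by rewrite -h3 conj2.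
have e0' : 2 * single + single^* = 0.
  apply: (@natr_mul_eq0 _ 2); rewrite -[RHS](mulr0 2) -e0.
  transitivity (6 * single + 2 * (2 * (hop 2)^*) + 2 * (hop 3)^*); last by ring.
  by rewrite c2 c3; ring.
apply: (@natr_mul_eq0 _ 2).
transitivity (2 * (2 * single + single^*) - (2 * single + single^*)^*).
  by rewrite rmorphD /= conj2 conjCK; ring.
by rewrite e0' conjC0; ring.
Qed.

Lemma vacuum_eigenvalue : vacuum = l.
Proof.
have e : 3 * vacuum + 6 * (double 2)^* + 3 * (double 3)^* - 3 * l = 0.
  by eigen_relation [::].
have [_ d2 d3] := doubles_vanish.
apply/eqP; rewrite -subr_eq0; apply/eqP/(@natr_mul_eq0 _ 2).
by rewrite -e d2 d3 conjC0; ring.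
Qed.

Lemma amp_vacuum_column (p : pred nat) :
  diffs [seq k <- iota 0 6 | p k] [::] != [::] -> amp [seq k <- iota 0 6 | p k] [::] = 0.
Proof.
have [d1 d2 d3] := doubles_vanish.
rewrite /=; case: (p 0); case: (p 1); case: (p 2); case: (p 3); case: (p 4); case: (p 5) => // _.
all: by reduce_amps; rewrite ?single_vanishes ?d1 ?d2 ?d3.
Qed.

Lemma ket0_eigen : H *m ket0 = l *: ket0.
Proof.
apply: col_ketP => x; rewrite mul_ket_entry mxE /ket0 zero_qubits ketE.
have [-> | x0] := eqVneq x (qubits [::]); first by rewrite vacuum_eigenvalue mulr1.
rewrite mulr0 -(qubits_support x) amp_vacuum_column //.
by rewrite -eq_qubits qubits_support.
Qed.

End SymmetricTwoBody.

Lemma ket0_not_multiple_Psi6 c : ket0 <> c *: Psi6.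
Proof.
move=> ket0_Psi.
have entry_at A :
    ket0 (enum_rank (qubits A)) 0 = c * ((3 * sqrtC 2)^-1 * (psi_weight A)%:R).
  by rewrite ket0_Psi mxE Psi6_entry.
move: (entry_at [:: 0; 2]) (entry_at [::]).
rewrite /ket0 zero_qubits !ketE !eq_qubits /=.
rewrite (_ : psi_weight [:: 0; 2] = 1%N) // mulr1 => /esym/eqP.
rewrite mulf_eq0 (negPf inv_3sqrt2_neq0) orbF => /eqP ->.
by rewrite mul0r => /eqP; rewrite oner_eq0.
Qed.

Theorem mainTheorem8 :
  ~ exists H : 'M[algC]_dim6,
      [/\ two_body H, herm_op H,
          (forall G, inG6 G -> adjM G *m H *m G = H) &
          unique_ground_state H Psi6].
Proof.
case=> H [[hs H_two_body] H_herm H_inv [l [_ _ ground]]].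
have H_rot : adjM Pc *m H *m Pc = H by move: (H_inv _ (inG6_Pc inG6_1)); rewrite mulmx1.
have H_refl : adjM Rf *m H *m Rf = H by move: (H_inv _ (inG6_Rf inG6_1)); rewrite mulmx1.
have H_Psi : H *m Psi6 = l *: Psi6 by apply/ground; exists 1; rewrite scale1r.
have [c] := (ground ket0).1 (ket0_eigen H_two_body H_herm H_rot H_refl H_Psi).
exact: ket0_not_multiple_Psi6.
Qed.
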